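(* Let $f:\mathbb{R}^n\to\mathbb{R}$ be twice continuously differentiable, $B\in\mathbb{R}^{p\times n}$, $\lambda_1,\lambda_2>0$, $l\in\mathbb{R}^n$ with $l\le 0$, $u\in\mathbb{R}^n$ with $u\ge 0$, $\Omega=\{x\in\mathbb{R}^n: l\le x\le u\}$, $g(x)=\lambda_1\|Bx\|_0+\lambda_2\|x\|_0+\delta_\Omega(x)$ and $F=f+g$. For $z\in\mathbb{R}^n$ let $$\Pi(z)=\{x\in\Omega:\ \mathrm{supp}(x)\subset\mathrm{supp}(z),\ \mathrm{supp}(Bx)\subset\mathrm{supp}(Bz)\}.$$ Fix any $z\in\Omega$. Then: (i) $\partial F(z)=\nabla f(z)+\partial g(z)=\nabla f(z)+\mathcal{N}_{\Pi(z)}(z)$; (ii) for any $x\in\mathbb{R}^n$, $0\in\nabla f(x)+\mathcal{N}_{\Pi(z)}(x)$ implies $0\in\partial F(x)$.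
   Context: $\|y\|_0$ is the number of nonzero entries of $y$ and $\mathrm{supp}(y)=\{i: y_i\neq 0\}$. $\delta_\Omega$ is the indicator function of $\Omega$ ($0$ on $\Omega$, $+\infty$ outside). $\partial$ denotes the basic (limiting) subdifferential. $\Pi(z)$ is a convex polyhedral set and $\mathcal{N}_{\Pi(z)}(x)$ is its normal cone at $x$ (empty if $x\notin\Pi(z)$). *)

From HB Require Import structures.
From mathcomp Require Import all_boot all_order all_algebra.
From mathcomp Require Import all_classical all_reals all_analysis.
Set Implicit Arguments. Unset Strict Implicit. Unset Printing Implicit Defensive.
Import Order.TTheory GRing.Theory Num.Theory.
Import numFieldNormedType.Exports.
Local Open Scope classical_set_scope.
Local Open Scope ring_scope.

Section Defs.
Variables (R : realType) (n : nat).
Local Notation V := 'rV[R]_n.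

Definition ebasis (i : 'I_n) : V := delta_mx 0 i.

Definition dotv (x y : V) : R := \sum_(i < n) x 0 i * y 0 i.

Definition partial (i : 'I_n) (f : V -> R) : V -> R := fun x => 'D_(ebasis i) f x.

Definition grad (f : V -> R) (x : V) : V := \row_i partial i f x.

Definition C2 (f : V -> R) : Prop :=
  [/\ forall i x, derivable f x (ebasis i),
      forall i, continuous (partial i f),
      forall i j x, derivable (partial i f) x (ebasis j)
    & forall i j, continuous (partial j (partial i f))].

Definition supp (m : nat) (y : 'rV[R]_m) : {set 'I_m} := [set i | y 0 i != 0].
Definition l0 (m : nat) (y : 'rV[R]_m) : nat := #|supp y|.

Definition box (l u : V) : set V := [set x | forall i, l 0 i <= x 0 i <= u 0 i].

Definition indic (A : set V) (x : V) : \bar R :=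
  if `[< A x >] then 0%E else +oo%E.

Definition ncone (C : set V) (x : V) : set V :=
  [set v | C x /\ forall y, C y -> dotv v (y - x) <= 0].

(* regular (Frechet) subdifferential of an extended-real-valued function:
   v such that h x is finite and
   liminf_{y -> x, y <> x} (h y - h x - <v, y - x>) / |y - x| >= 0,
   written out with epsilons. *)
Definition fsubdiff (h : V -> \bar R) (x : V) : set V :=
  [set v | h x \is a fin_num /\
     forall eps : R, 0 < eps ->
       \forall y \near x, (h x + (dotv v (y - x) - eps * `|y - x|)%:E <= h y)%E].

Definition lsubdiff (h : V -> \bar R) (x : V) : set V :=
  [set v | h x \is a fin_num /\
     exists (xs vs : nat -> V),
       [/\ xs @ \oo --> x,
           (fun k => h (xs k)) @ \oo --> h x,
           (forall k, fsubdiff h (xs k) (vs k))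
         & vs @ \oo --> v]].

End Defs.

Section Problem.
Variables (R : realType) (n p : nat).
Local Notation V := 'rV[R]_n.

(* g(x) = lam1 ||Bx||_0 + lam2 ||x||_0 + delta_Omega(x), with Bx := x *m B^T *)
Definition gfun (B : 'M[R]_(p, n)) (lam1 lam2 : R) (l u : V) (x : V) : \bar R :=
  ((lam1 * (l0 (x *m B^T))%:R + lam2 * (l0 x)%:R)%:E + indic (box l u) x)%E.

Definition Ffun (f : V -> R) (B : 'M[R]_(p, n)) (lam1 lam2 : R) (l u : V) (x : V)
  : \bar R := ((f x)%:E + gfun B lam1 lam2 l u x)%E.

Definition Pi (B : 'M[R]_(p, n)) (l u : V) (z : V) : set V :=
  [set x | box l u x /\ supp x \subset supp z /\
           supp (x *m B^T) \subset supp (z *m B^T)].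
End Problem.

(* Near z, supports can only grow, so on Omega the l0 penalty either keeps
   the value it has at z (exactly on the convex polyhedron Pi(z)) or jumps up
   by at least min(lam1, lam2).  Hence the regular subgradients of g at z are
   the normals of Pi(z) at z.  If x_k -> z with g(x_k) -> g(z), the penalty
   cannot jump, so Pi(x_k) = Pi(z) eventually and these normal cones pass to
   the limit: the limiting subdifferential of g at z is the same cone.  A C^1
   function is Frechet differentiable with derivative <grad f, .> (mean value
   theorem along the coordinate directions), so adding f shifts both
   subdifferentials by grad f.  For (ii), x in Pi(z) gives Pi(x) within Pi(z),
   so a normal of Pi(z) at x is a normal of Pi(x) at x. *)

From Pilot Require Import Defs.
From HB Require Import structures.
From mathcomp Require Import all_boot all_order all_algebra.
From mathcomp Require Import all_classical all_reals all_analysis.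
From mathcomp Require Import ring lra.
Set Implicit Arguments. Unset Strict Implicit. Unset Printing Implicit Defensive.
Import Order.TTheory GRing.Theory Num.Theory.
Import numFieldNormedType.Exports.
Local Open Scope classical_set_scope.
Local Open Scope ring_scope.

Section line_derivative.
Variables (R : realFieldType) (V W : normedModType R).

Let line_quotient (f : V -> W) (x e : V) (t : R) :
  (fun h : R => h^-1 *: (((fun s => f (x + s *: e)) \o shift t) (h *: 1)
                          - f (x + t *: e)))
  = (fun h => h^-1 *: ((f \o shift (x + t *: e)) (h *: e) - f (x + t *: e))).
Proof.
apply/funext => h /=; rewrite [h *: 1]mulr1 scalerDl.
by congr (_ *: (f _ - _)); rewrite addrCA addrC.
Qed.

Lemma derivable_line (f : V -> W) (x e : V) (t : R) :
  derivable (fun s : R => f (x + s *: e)) t 1 = derivable f (x + t *: e) e.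
Proof. by rewrite /derivable line_quotient. Qed.

Lemma derive_line (f : V -> W) (x e : V) (t : R) :
  'D_1 (fun s : R => f (x + s *: e)) t = 'D_e f (x + t *: e).
Proof. by rewrite /derive line_quotient. Qed.

End line_derivative.

Section matrix_norm.
Variables (R : realType) (m k : nat).
Implicit Types M N : 'M[R]_(m, k).

Lemma mx_entry_le_norm M i j : `|M i j| <= `|M|.
Proof.
by rewrite [leRHS]/Num.norm /= mx_normrE; apply/bigmax_geP; right; exists (i, j).
Qed.

Lemma mx_norm_le M c : 0 <= c -> (forall i j, `|M i j| <= c) -> `|M| <= c.
Proof.
move=> c0 Mc; rewrite [leLHS]/Num.norm /= mx_normrE.
by apply/bigmax_leP; split=> // -[i j].
Qed.

Lemma mx_entry_dist_le M N i j : `|M i j - N i j| <= `|M - N|.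
Proof. by have := mx_entry_le_norm (M - N) i j; rewrite !mxE. Qed.

Lemma cvg_mx_entries (T : Type) (F : set_system T) {FF : Filter F}
    (h : T -> 'M[R]_(m, k)) M :
  (forall i j, (fun t => h t i j) @ F --> M i j) -> h @ F --> M.
Proof.
move=> hM; apply/cvgrPdist_le => e e0.
have : \forall t \near F, forall i j, `|M i j - h t i j| <= e.
  apply: filter_forall => i; apply: filter_forall => j.
  exact: (cvgrPdist_le _ _).1 (hM i j) e e0.
apply: filterS => t Ht; apply: mx_norm_le => [|i j]; first exact: ltW.
by rewrite !mxE; exact: Ht.
Qed.

Lemma cvg_mx_entry (T : Type) (F : set_system T) {FF : Filter F}
    (h : T -> 'M[R]_(m, k)) M :
  h @ F --> M -> forall i j, (fun t => h t i j) @ F --> M i j.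
Proof.
by move=> hM i j; apply: (@continuous_cvg _ _ _ _ _ h (fun N => N i j) M _ hM);
  exact: coord_continuous.
Qed.

End matrix_norm.

Arguments cvg_mx_entry {R m k T F FF h M} hM i j.

Lemma mvt_linear_bound (R : realType) (phi dphi : R -> R) (d c0 c : R) :
  (forall s : R, is_derive s (1 : R) phi (dphi s)) ->
  (forall s, `|s| <= `|d| -> `|dphi s - c0| <= c) ->
  `|phi d - phi 0 - c0 * d| <= c * `|d|.
Proof.
move=> phi' dphi_near.
have phi_cont a b : {within `[a, b], continuous phi}.
  by apply: derivable_within_continuous => s _; exact: ex_derive.
have [d0|d0] := leP 0 d.
  have [xi /itvP xiI ->] := MVT_segment d0 (fun s _ => phi' s) (phi_cont 0 d).
  rewrite subr0 -mulrBl normrM ler_wpM2r // dphi_near //.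
  by rewrite !ger0_norm ?xiI.
have [xi xiI E] := MVT_segment (ltW d0) (fun s _ => phi' s) (phi_cont d 0).
move: xiI; rewrite in_itv /= => /andP[dxi xi0].
have -> : phi d - phi 0 - c0 * d = (dphi xi - c0) * d.
  have : phi 0 - phi d = dphi xi * (0 - d) := E.
  by rewrite sub0r mulrN => /(congr1 -%R); rewrite opprB opprK mulrBl => ->.
rewrite normrM ler_wpM2r // dphi_near // (ltr0_norm d0) ler_norml opprK dxi /=.
by rewrite (le_trans xi0) // lerNr oppr0 ltW.
Qed.

Section gradient.
Variables (R : realType) (n : nat).
Local Notation V := 'rV[R]_n.
Implicit Types (f : V -> R) (x y v w : V).

Definition C1 f : Prop :=
  (forall i x, derivable f x (ebasis R i)) /\ (forall i, continuous (partial i f)).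

Lemma C2_C1 f : C2 f -> C1 f.
Proof. by case. Qed.

Lemma dotv0r v : dotv v 0 = 0.
Proof. by rewrite /dotv big1 // => i _; rewrite mxE mulr0. Qed.

Lemma dotvZr v w (t : R) : dotv v (t *: w) = t * dotv v w.
Proof. by rewrite /dotv mulr_sumr; apply: eq_bigr => i _; rewrite mxE; ring. Qed.

Lemma dotvBl v v' w : dotv (v - v') w = dotv v w - dotv v' w.
Proof. by rewrite /dotv -sumrB; apply: eq_bigr => i _; rewrite !mxE; ring. Qed.

Lemma dotv_le v w : `|dotv v w| <= (\sum_i `|v 0 i|) * `|w|.
Proof.
rewrite /dotv mulr_suml; apply: le_trans (ler_norm_sum _ _ _) _.
by apply: ler_sum => i _; rewrite normrM ler_wpM2l // mx_entry_le_norm.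
Qed.

Lemma cvg_dotv (T : Type) (F : set_system T) {FF : Filter F} (vs ws : T -> V) v w :
  vs @ F --> v -> ws @ F --> w -> (fun t => dotv (vs t) (ws t)) @ F --> dotv v w.
Proof.
move=> vs_v ws_w; apply: (@cvg_big R _ +%R 0 xpredT add_continuous) => i _.
by apply: cvgM; exact: cvg_mx_entry.
Qed.

Lemma continuous_grad f : C1 f -> continuous (grad f).
Proof.
move=> [_ partial_cont] x; apply: (cvg_mx_entries (FF := nbhs_filter x)) => i j.
by rewrite (ord1 i) mxE; under eq_fun do rewrite mxE; exact: partial_cont.
Qed.

Definition coord_path x y (k : nat) : V :=
  \row_j (if (j < k)%N then y 0 j else x 0 j).

Lemma coord_path0 x y : coord_path x y 0 = x.
Proof. by apply/rowP => j; rewrite !mxE. Qed.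

Lemma coord_path_n x y : coord_path x y n = y.
Proof. by apply/rowP => j; rewrite !mxE ltn_ord. Qed.

Lemma coord_pathS x y (k : 'I_n) :
  coord_path x y k.+1 = coord_path x y k + (y 0 k - x 0 k) *: ebasis R k.
Proof.
apply/rowP => j; rewrite /ebasis !mxE ltnS leq_eqVlt.
have [->|jk] := eqVneq j k; first by rewrite ltnn eqxx mulr1 addrC subrK.
by move: (jk); rewrite -val_eqE => /negbTE -> /=; rewrite mulr0 addr0.
Qed.

Lemma coord_path_dist x y (k : 'I_n) (s : R) : `|s| <= `|y 0 k - x 0 k| ->
  `|x - (coord_path x y k + s *: ebasis R k)| <= `|x - y|.
Proof.
move=> sk; apply: mx_norm_le => // i j; rewrite (ord1 i) /ebasis !mxE.
have [jk|kj] := ltnP j k.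
  rewrite (_ : (j == k) = false) /= ?mulr0 ?addr0 ?mx_entry_dist_le //.
  by rewrite -val_eqE ltn_eqF.
have [->|jk] := eqVneq j k; last by rewrite /= mulr0 addr0 subrr normr0.
rewrite /= mulr1 opprD addrA subrr sub0r normrN (le_trans sk) // distrC.
exact: mx_entry_dist_le.
Qed.

Lemma C1_frechet f : C1 f -> forall x (eps : R), 0 < eps ->
  \forall y \near x, `|f y - f x - dotv (grad f x) (y - x)| <= eps * `|y - x|.
Proof.
move=> [f' partial_cont] x eps eps0.
pose c := eps / n.+1%:R.
have c0 : 0 < c by rewrite divr_gt0.
have : \forall q \near x, forall i, `|partial i f x - partial i f q| < c.
  apply: (filter_forall (nbhs_filter x)
    (f := fun i q => `|partial i f x - partial i f q| < c)) => i.
  exact: (cvgr_dist_lt _ _ (partial_cont i x) _ c0).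
move=> /nbhs_ballP[r r0 partial_near].
apply: filterS (near_ball x r r0) => y; rewrite -ball_normE /ball_ => xy.
have step (k : 'I_n) : `|f (coord_path x y k.+1) - f (coord_path x y k)
    - partial k f x * (y - x) 0 k| <= c * `|y - x|.
  rewrite coord_pathS !mxE.
  have := @mvt_linear_bound R (fun s => f (coord_path x y k + s *: ebasis R k))
    (fun s => partial k f (coord_path x y k + s *: ebasis R k))
    (y 0 k - x 0 k) (partial k f x) c.
  rewrite scale0r addr0 => mvt; apply: le_trans (mvt _ _) _ => [s|s sk|].
  - by split; rewrite ?derivable_line ?derive_line.
  - rewrite distrC ltW // partial_near // -ball_normE /ball_.
    exact: le_lt_trans (coord_path_dist sk) xy.
  - by rewrite ler_pM2l // mx_entry_dist_le.
pose df k := f (coord_path x y k.+1) - f (coord_path x y k).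
have -> : f y - f x = \sum_(k < n) df k.
  by rewrite -(big_mkord xpredT df) telescope_sumr // coord_path_n coord_path0.
rewrite /dotv -sumrB (eq_bigr (fun k : 'I_n => f (coord_path x y k.+1)
    - f (coord_path x y k) - partial k f x * (y - x) 0 k)); last first.
  by move=> k _; rewrite [grad f x 0 k]mxE.
apply: le_trans (ler_norm_sum _ _ _) _.
apply: le_trans (ler_sum _ (fun k _ => step k)) _.
rewrite sumr_const card_ord -mulrnAl ler_wpM2r // /c -mulr_natr -mulrA.
rewrite ler_piMr ?ltW //.
by rewrite mulrC ltr_pdivrMr ?ltr0n // mul1r ltr_nat.
Qed.

Lemma C1_continuous f : C1 f -> continuous f.
Proof.
move=> f1 x; apply/(cvgrPdist_lt (FF := nbhs_filter x)) => e e0.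
pose S := \sum_i `|grad f x 0 i|.
have S0 : 0 <= S by exact: sumr_ge0.
have r0 : 0 < e / (S + 2) by rewrite divr_gt0 // ltr_wpDl.
apply: filterS2 (C1_frechet f1 x ltr01) (near_ball x _ r0) => y f_near.
rewrite -ball_normE /ball_ /= distrC => xy.
have := dotv_le (grad f x) (y - x); rewrite -/S => dot_le.
have : `|y - x| * (S + 2) < e by rewrite -ltr_pdivlMr // ltr_wpDl.
have : 0 <= `|y - x| by [].
move: f_near dot_le; rewrite mul1r !ler_norml ltr_norml.
move=> /andP[? ?] /andP[? ?] ? ?.
apply/andP; split; nra.
Qed.

End gradient.

Section plus_indic.
Variables (R : realType) (n : nat).
Local Notation V := 'rV[R]_n.
Implicit Types (A : set V) (H f : V -> R) (x z v : V).

Definition plus_indic A H : V -> \bar R :=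
  fun y => if `[< A y >] then (H y)%:E else +oo%E.

Lemma plus_indic_fin_num A H x : plus_indic A H x \is a fin_num <-> A x.
Proof. by rewrite /plus_indic; case: asboolP. Qed.

Lemma fsubdiff_plus_indicP A H x v :
  fsubdiff (plus_indic A H) x v <->
  A x /\ forall eps, 0 < eps -> \forall y \near x,
    A y -> H x + (dotv v (y - x) - eps * `|y - x|) <= H y.
Proof.
rewrite /fsubdiff /plus_indic /=; split.
  case=> /plus_indic_fin_num Ax v_sub; split=> // eps eps0.
  apply: filterS (v_sub eps eps0) => y; rewrite (asboolT Ax).
  by case: asboolP => // _; rewrite lee_fin.
case=> Ax v_sub; rewrite (asboolT Ax); split=> // eps eps0.
apply: filterS (v_sub _ eps0) => y Hy; case: asboolP => [/Hy|_]; last exact: leey.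
by rewrite lee_fin.
Qed.

Lemma fsubdiff_plus_indic_C1 A H f x v : C1 f ->
  fsubdiff (plus_indic A (f \+ H)) x v <->
  fsubdiff (plus_indic A H) x (v - grad f x).
Proof.
move=> f1; rewrite !fsubdiff_plus_indicP /=.
have eps2 eps : 0 < eps -> 0 < eps / 2 by move=> ?; rewrite divr_gt0.
by split=> -[Ax v_sub]; split=> // eps /eps2 eps0;
  apply: filterS2 (v_sub _ eps0) (C1_frechet f1 x eps0) => y sub_y f_y Ay;
  move: (sub_y Ay) f_y; rewrite dotvBl ler_norml => ? /andP[? ?]; lra.
Qed.

Lemma cvg_plus_indic A H (T : Type) (F : set_system T) {FF : Filter F}
    (xs : T -> V) z :
  (forall t, A (xs t)) -> A z ->
  plus_indic A H (xs t) @[t --> F] --> plus_indic A H z <->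
  H (xs t) @[t --> F] --> H z.
Proof.
move=> Axs Az; rewrite /plus_indic (asboolT Az).
under eq_fun do rewrite (asboolT (Axs _)).
by split=> [/fine_cvgP[]//|H_cvg]; apply: cvg_EFin => //; exact: nearW.
Qed.

Lemma lsubdiff_plus_indic_C1 A H f z v : C1 f ->
  lsubdiff (plus_indic A (f \+ H)) z v <->
  lsubdiff (plus_indic A H) z (v - grad f z).
Proof.
move=> f1.
have f_cvg (xs : nat -> V) : xs @ \oo --> z -> f (xs k) @[k --> \oo] --> f z.
  by move=> xs_z; apply: continuous_cvg xs_z; exact: C1_continuous.
have grad_cvg (xs : nat -> V) :
    xs @ \oo --> z -> grad f (xs k) @[k --> \oo] --> grad f z.
  by move=> xs_z; apply: continuous_cvg xs_z; exact: continuous_grad.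
split=> -[/plus_indic_fin_num Az [xs [vs [xs_z h_cvg vs_sub vs_v]]]].
  split; first exact/plus_indic_fin_num.
  have Axs k : A (xs k) by have /fsubdiff_plus_indicP[] := vs_sub k.
  exists xs, (fun k => vs k - grad f (xs k)); split=> //.
  - move: h_cvg; rewrite !cvg_plus_indic // => fH_cvg.
    rewrite (_ : H = (f \+ H) \- f); last first.
      by apply/funext => y /=; rewrite addrC addKr.
    exact: cvgB fH_cvg (f_cvg _ xs_z).
  - by move=> k; apply/fsubdiff_plus_indic_C1.
  - exact: cvgB vs_v (grad_cvg _ xs_z).
split; first exact/plus_indic_fin_num.
have Axs k : A (xs k) by have /fsubdiff_plus_indicP[] := vs_sub k.
exists xs, (fun k => vs k + grad f (xs k)); split=> //.
- rewrite cvg_plus_indic //; move: h_cvg; rewrite cvg_plus_indic // => H_cvg.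
  exact: cvgD (f_cvg _ xs_z) H_cvg.
- by move=> k; apply/fsubdiff_plus_indic_C1; rewrite //= addrK.
- by rewrite -(subrK (grad f z) v); exact: cvgD vs_v (grad_cvg _ xs_z).
Qed.

End plus_indic.

Section support.
Variable R : realType.

Lemma continuous_mulmxr m n k (M : 'M[R]_(n, k)) :
  continuous (fun X : 'M[R]_(m, n) => X *m M).
Proof.
move=> X; apply: (cvg_mx_entries (FF := nbhs_filter X)) => i j; rewrite mxE.
under eq_fun do rewrite mxE.
apply: (@cvg_big R _ +%R 0 xpredT add_continuous) => c _.
apply: cvgM; last exact: cvg_cst.
exact: (cvg_mx_entry (FF := nbhs_filter X) cvg_id).
Qed.

Lemma supp_subset_near (T : topologicalType) m (h : T -> 'rV[R]_m) (x : T) :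
  h @ x --> h x -> \forall y \near x, supp (h x) \subset supp (h y).
Proof.
move=> h_cont.
suff : \forall y \near x, forall j, h x 0 j != 0 -> h y 0 j != 0.
  by apply: filterS => y hy; apply/fintype.subsetP => j; rewrite !inE; exact: hy.
apply: (@filter_forall _ _ (fun j y => h x 0 j != 0 -> h y 0 j != 0) _
  (nbhs_filter x)) => j.
have [_|hx0] := eqVneq (h x 0 j) 0; first exact: nearW.
near=> y => _; near: y.
exact: cvgr_neq0 (cvg_mx_entry h_cont 0 j) hx0.
Unshelve. all: by end_near. Qed.

Lemma supp_segment m (a b c : 'rV[R]_m) (t : R) :
  supp a \subset supp c -> supp b \subset supp c ->
  supp (a + t *: (b - a)) \subset supp c.
Proof.
have entry0 (d c' : 'rV[R]_m) i : supp d \subset supp c' -> c' 0 i = 0 -> d 0 i = 0.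
  move=> /fintype.subsetP dc ci0; apply/eqP/negPn/negP => di0.
  by have := dc i; rewrite !inE ci0 eqxx di0 => /(_ isT).
move=> ac bc; apply/fintype.subsetP => i; rewrite !inE !mxE.
apply: contraNneq => ci0.
by rewrite (entry0 _ _ _ ac ci0) (entry0 _ _ _ bc ci0) subrr mulr0 addr0.
Qed.

Lemma l0_le m (a b : 'rV[R]_m) :
  supp a \subset supp b -> (l0 a)%:R <= (l0 b)%:R :> R.
Proof. by move=> ab; rewrite ler_nat subset_leq_card. Qed.

Lemma l0_ltS m (a b : 'rV[R]_m) : supp a \subset supp b ->
  ~~ (supp b \subset supp a) -> (l0 a)%:R + 1 <= (l0 b)%:R :> R.
Proof.
by move=> ab ba; rewrite natr1 ler_nat; apply: proper_card; rewrite properE ab.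
Qed.

End support.

Section normal_cone.
Variables (R : realType) (n : nat).
Local Notation V := 'rV[R]_n.
Implicit Types (C D : set V) (x z v w : V).

Lemma ncone_subset C D x w : D `<=` C -> D x -> ncone C x w -> ncone D x w.
Proof. by move=> DC Dx [_ w_normal]; split=> // y /DC; exact: w_normal. Qed.

Lemma ncone_of_regular_normal C x v :
  C x -> (forall y (t : R), C y -> 0 <= t <= 1 -> C (x + t *: (y - x))) ->
  (forall eps : R, 0 < eps -> \forall y \near x,
     C y -> dotv v (y - x) <= eps * `|y - x|) ->
  ncone C x v.
Proof.
move=> Cx C_segment v_local; split=> // y Cy.
apply/ler_addgt0Pr => e e0; rewrite add0r.
have N0 : 0 < `|y - x| + 1 by rewrite ltr_wpDl.
have [r r0 /(_ (x + _ *: (y - x)))] :=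
  (nbhs_ballP _ _).1 (v_local _ (divr_gt0 e0 N0)).
pose t := Num.min 1 (r / (2 * (`|y - x| + 1))).
have t0 : 0 < t by rewrite lt_min ltr01 /= divr_gt0 // mulr_gt0.
have t_small : t * (2 * (`|y - x| + 1)) <= r.
  by rewrite -ler_pdivlMr ?mulr_gt0 // ge_min lexx orbT.
(* Test the hypothesis at the point x + t (y - x) of C, which lies in the
   ball of radius r. *)
have t01 : 0 <= t <= 1 by rewrite ltW // ge_min lexx.
have tN0 : 0 <= t * `|y - x| by rewrite mulr_ge0 // ltW.
have w_ball : ball x r (x + t *: (y - x)).
  rewrite -ball_normE /ball_ /= opprD addrA subrr sub0r normrN normrZ.
  by rewrite gtr0_norm //; nra.
move=> /(_ t w_ball (C_segment _ _ Cy t01)).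
rewrite (addrC x) addrK dotvZr normrZ gtr0_norm // mulrCA ler_pM2l //.
move=> /le_trans; apply.
by rewrite mulrAC ler_pdivrMr // ler_pM2l // lerDl.
Qed.

Lemma ncone_cvg C (T : Type) (F : set_system T) {FF : ProperFilter F}
    (xs ws : T -> V) z w :
  C z -> xs @ F --> z -> ws @ F --> w ->
  (\forall t \near F, ncone C (xs t) (ws t)) -> ncone C z w.
Proof.
move=> Cz xs_z ws_w ws_normal; split=> // y Cy.
apply: (closed_cvg _ (@closed_le R 0) _ _ (cvg_dotv ws_w (cvgB (cvg_cst y) xs_z))).
by apply: filterS ws_normal => t [_]; exact.
Qed.

End normal_cone.

Section l0_penalty.
Variables (R : realType) (n p : nat) (B : 'M[R]_(p, n)).
Variables (lam1 lam2 : R) (l u : 'rV[R]_n).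
Hypotheses (lam1_gt0 : 0 < lam1) (lam2_gt0 : 0 < lam2).
Local Notation V := 'rV[R]_n.
Local Notation Pi := (Pi B l u).
Local Notation g := (gfun B lam1 lam2 l u).
Implicit Types (x y z v : V).

Definition l0pen x : R := lam1 * (l0 (x *m B^T))%:R + lam2 * (l0 x)%:R.

Lemma gfun_plus_indic : g = plus_indic (box l u) l0pen.
Proof.
apply/funext => x; rewrite /gfun /Defs.indic /plus_indic.
by case: asboolP => _; rewrite ?adde0 ?addey.
Qed.

Lemma Ffun_plus_indic f :
  Ffun f B lam1 lam2 l u = plus_indic (box l u) (f \+ l0pen).
Proof.
apply/funext => x; rewrite /Ffun gfun_plus_indic /plus_indic.
by case: asboolP => _; rewrite ?addey.
Qed.

(* [Pi z x] unfolds to [box l u x /\ supp_incl x z]. *)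
Definition supp_incl x y : Prop :=
  supp x \subset supp y /\ supp (x *m B^T) \subset supp (y *m B^T).

Lemma supp_incl_refl x : supp_incl x x.
Proof. by split; exact: subxx. Qed.

Lemma supp_incl_trans x y z : supp_incl x y -> supp_incl y z -> supp_incl x z.
Proof.
move=> [xy xyB] [yz yzB].
by split; [exact: fintype.subset_trans xy yz | exact: fintype.subset_trans xyB yzB].
Qed.

Lemma supp_incl_near x : \forall y \near x, supp_incl x y.
Proof.
near=> y; split; near: y.
  exact: (supp_subset_near (h := id) cvg_id).
exact: (supp_subset_near (h := fun y : V => y *m B^T)
  (@continuous_mulmxr R 1 n p B^T x)).
Unshelve. all: by end_near. Qed.

Lemma l0pen_le x y : supp_incl x y -> l0pen x <= l0pen y.
Proof.
by move=> [xy xyB]; apply: lerD; apply: ler_wpM2l; by [exact: ltW | exact: l0_le].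
Qed.

Lemma l0pen_gap x y : supp_incl x y ->
  supp_incl y x \/ l0pen x + Num.min lam1 lam2 <= l0pen y.
Proof.
move=> [xy xyB]; rewrite /l0pen.
have min1 : Num.min lam1 lam2 <= lam1 by rewrite ge_min lexx.
have min2 : Num.min lam1 lam2 <= lam2 by rewrite ge_min lexx orbT.
have le1 := ler_wpM2l (ltW lam1_gt0) (l0_le xyB).
have le2 := ler_wpM2l (ltW lam2_gt0) (l0_le xy).
have [yx|/(l0_ltS xy)/(ler_wpM2l (ltW lam2_gt0))] := boolP (supp y \subset supp x).
  have [yxB|/(l0_ltS xyB)/(ler_wpM2l (ltW lam1_gt0))] :=
    boolP (supp (y *m B^T) \subset supp (x *m B^T)); first by left.
  by rewrite mulrDr mulr1 => lt1; right; lra.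
by rewrite mulrDr mulr1 => lt2; right; lra.
Qed.

Lemma box_segment x y (t : R) : box l u x -> box l u y -> 0 <= t <= 1 ->
  box l u (x + t *: (y - x)).
Proof.
move=> bx b_y /andP[t0 t1] i; rewrite !mxE.
have /andP[lx ux] := bx i; have /andP[ly uy] := b_y i.
by apply/andP; split; nra.
Qed.

Lemma Pi_segment z x y (t : R) : Pi z x -> Pi z y -> 0 <= t <= 1 ->
  Pi z (x + t *: (y - x)).
Proof.
move=> [bx [xz xzB]] [b_y [yz yzB]] t01; split; first exact: box_segment.
split; first exact: supp_segment.
by rewrite mulmxDl -scalemxAl mulmxBl; exact: supp_segment.
Qed.

Lemma Pi_self z : box l u z -> Pi z z.
Proof. by move=> bz; split; last exact: supp_incl_refl. Qed.

Lemma Pi_subset x z : supp_incl x z -> Pi x `<=` Pi z.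
Proof. by move=> xz y [b_y yx]; split; last exact: supp_incl_trans yx xz. Qed.

Lemma min_lam_gt0 : 0 < Num.min lam1 lam2.
Proof. by rewrite lt_min lam1_gt0 lam2_gt0. Qed.

Lemma ncone_of_fsubdiff x v : fsubdiff g x v -> ncone (Pi x) x v.
Proof.
rewrite gfun_plus_indic => /fsubdiff_plus_indicP[bx v_sub].
apply: ncone_of_regular_normal => [|y t|eps /v_sub]; first exact: Pi_self.
  by move=> Py; apply: Pi_segment => //; exact: Pi_self.
apply: filterS => y v_le [b_y yx].
by have := l0pen_le yx; have := v_le b_y; lra.
Qed.

Lemma fsubdiff_of_ncone x v : ncone (Pi x) x v -> fsubdiff g x v.
Proof.
move=> [[bx _] v_normal]; rewrite gfun_plus_indic; apply/fsubdiff_plus_indicP.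
split=> // eps eps0.
have dotv_small : \forall y \near x, dotv v (y - x) < Num.min lam1 lam2.
  apply: (cvgr_lt (FF := nbhs_filter x)) min_lam_gt0.
  rewrite [X in _ --> X](_ : 0 = dotv v (x - x)); last by rewrite subrr dotv0r.
  exact: (cvg_dotv (FF := nbhs_filter x) (cvg_cst v) (cvgB cvg_id (cvg_cst x))).
apply: filterS2 (supp_incl_near x) dotv_small => y xy v_small b_y.
have eps_dist : 0 <= eps * `|y - x| by rewrite mulr_ge0 // ltW.
have [yx|] := l0pen_gap xy; last lra.
have := v_normal y (conj b_y yx).
have := l0pen_le xy; have := l0pen_le yx.
lra.
Qed.

Lemma fsubdiff_gfunP x v : fsubdiff g x v <-> ncone (Pi x) x v.
Proof. by split; [exact: ncone_of_fsubdiff | exact: fsubdiff_of_ncone]. Qed.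

Lemma Pi_eventually_eq (xs : nat -> V) z :
  xs @ \oo --> z -> l0pen (xs k) @[k --> \oo] --> l0pen z ->
  \forall k \near \oo, Pi (xs k) = Pi z.
Proof.
move=> xs_z pen_cvg; near=> k.
have zk : supp_incl z (xs k) by near: k; apply: xs_z; exact: supp_incl_near.
have pen_close : `|l0pen z - l0pen (xs k)| < Num.min lam1 lam2.
  by near: k; exact: cvgr_dist_lt pen_cvg _ min_lam_gt0.
have [kz|] := l0pen_gap zk.
  by apply/seteqP; split; apply: Pi_subset.
by move: pen_close; rewrite ltr_norml => /andP[? _] ?; exfalso; lra.
Unshelve. all: by end_near. Qed.

Lemma lsubdiff_gfunP z v : lsubdiff g z v <-> ncone (Pi z) z v.
Proof.
split=> [[gz [xs [vs [xs_z g_cvg /(_ _)/fsubdiff_gfunP vs_normal vs_v]]]]|vz].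
  have bz : box l u z by move: gz; rewrite gfun_plus_indic => /plus_indic_fin_num.
  have bxs k : box l u (xs k) by have [[]] := vs_normal k.
  move: g_cvg; rewrite gfun_plus_indic cvg_plus_indic // => pen_cvg.
  apply: (ncone_cvg (FF := eventually_filter) (Pi_self bz) xs_z vs_v).
  by apply: filterS (Pi_eventually_eq xs_z pen_cvg) => k <-.
have [[bz _] _] := vz.
split; first by rewrite gfun_plus_indic; exact/plus_indic_fin_num.
exists (fun=> z), (fun=> v); split; try exact: cvg_cst.
by move=> _; exact/fsubdiff_gfunP.
Qed.

End l0_penalty.

Lemma image_addl (V : zmodType) (a : V) (S : set V) :
  (fun w => a + w) @` S = [set v | S (v - a)].
Proof.
apply/seteqP; split=> [_ [w Sw <-]|v Sv] /=; first by rewrite addrAC subrr add0r.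
by exists (v - a); rewrite // addrC subrK.
Qed.

Theorem lemma2p4 (R : realType) (n p : nat) (f : 'rV[R]_n -> R)
  (B : 'M[R]_(p, n)) (lam1 lam2 : R) (l u : 'rV[R]_n) :
  C2 f -> 0 < lam1 -> 0 < lam2 ->
  (forall i, l 0 i <= 0) -> (forall i, 0 <= u 0 i) ->
  forall z : 'rV[R]_n, box l u z ->
  [/\ lsubdiff (Ffun f B lam1 lam2 l u) z
        = (fun w => grad f z + w) @` lsubdiff (gfun B lam1 lam2 l u) z,
      (fun w => grad f z + w) @` lsubdiff (gfun B lam1 lam2 l u) z
        = (fun w => grad f z + w) @` ncone (Pi B l u z) z
    & forall x : 'rV[R]_n,
        ((fun w => grad f x + w) @` ncone (Pi B l u z) x) 0 ->
        lsubdiff (Ffun f B lam1 lam2 l u) x 0].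
Proof.
move=> /C2_C1 f1 lam1_gt0 lam2_gt0 _ _ z _.
have lsubdiff_F x v : lsubdiff (Ffun f B lam1 lam2 l u) x v <->
    ncone (Pi B l u x) x (v - grad f x).
  rewrite Ffun_plus_indic (lsubdiff_plus_indic_C1 _ _ _ _ f1) -gfun_plus_indic.
  exact: lsubdiff_gfunP.
have lsubdiff_g : lsubdiff (gfun B lam1 lam2 l u) z = ncone (Pi B l u z) z.
  by apply/predeqP => v; exact: lsubdiff_gfunP.
rewrite lsubdiff_g image_addl; split=> //.
  by apply/predeqP => v; exact: lsubdiff_F.
move=> x [w w_normal w_eq]; apply/lsubdiff_F.
have -> : 0 - grad f x = w by rewrite -w_eq addrAC subrr add0r.
have [[bx xz] _] := w_normal.
by apply: ncone_subset w_normal; [exact: Pi_subset | exact: Pi_self].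
Qed.
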